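(* Let $\kappa_1<\dots<\kappa_M$ be real and let $A=(a_{k,j})$ be a real $N\times M$ matrix ($N<M$) of rank $N$ in reduced row echelon form that is totally nonnegative and irreducible, with pivot columns $I_0=\{i_1<\dots<i_N\}$. Enumerate the non-pivot nonzero entries of $A$ as $\sigma=1,\dots,\tilde g$ (data $b_\sigma,c_\sigma,\tilde\phi_\sigma$ as in the context). Define for $\sigma\ne\rho$ $$C_{\sigma,\rho}=\frac{(b_\sigma-b_\rho)(c_\sigma-c_\rho)}{(b_\sigma-c_\rho)(c_\sigma-b_\rho)}$$ (so $C_{\sigma,\rho}=0$ if the two entries lie in the same row or in the same column; formally $C_{\sigma,\rho}=e^{2\pi i\tilde\Omega_{\sigma,\rho}}$ with $\tilde\Omega_{\sigma,\rho}=+i\infty$ in that case). Then the KP $\tau$-function $\tau_A(x,y,t)=\sum_{I\in\binom{[M]}{N}}\Delta_I(A)E_I(x,y,t)$ satisfies $$\frac{\tau_A(x,y,t)}{E_{I_0}(x,y,t)}=\tilde\vartheta^{(\tilde g)}_{\tilde g}(\mathbf z;\tilde\Omega)=\sum_{\mathbf m\in\{0,1\}^{\tilde g}}\ \prod_{\sigma<\rho}C_{\sigma,\rho}^{\,m_\sigma m_\rho}\ \exp\Big(\sum_{\sigma=1}^{\tilde g}m_\sigma\tilde\phi_\sigma\Big),$$ with the convention $0^0=1$; here $2\pi i z_\sigma=\tilde\phi_\sigma(x,y,t)$.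
   Context: $\xi_j=\kappa_jx+\kappa_j^2y+\kappa_j^3t$; for $I=\{i_1<\dots<i_N\}\subset[M]$, $E_I=\prod_{a<b}(\kappa_{i_b}-\kappa_{i_a})\exp(\xi_{i_1}+\dots+\xi_{i_N})$ and $\Delta_I(A)$ is the $N\times N$ minor of $A$ on columns $I$. $A$ is totally nonnegative if all $\Delta_I(A)\ge0$; $A$ in reduced row echelon form is irreducible if each row has a nonzero entry besides its pivot and no column is zero. Row $k$ has its pivot in column $i_k$; let $j^{(k)}_1<\dots<j^{(k)}_{n_k}$ be the non-pivot columns with $a_{k,j}\ne0$, $\tilde g_k=n_1+\dots+n_k$, $\tilde g_0=0$, $\tilde g=\tilde g_N$ (the number of nonzero non-pivot entries of $A$). For $\sigma=\tilde g_{k-1}+m$ ($1\le m\le n_k$): $b_\sigma=\kappa_{i_k}$, $c_\sigma=\kappa_{j^{(k)}_m}$, $\phi_\sigma=\xi_{j^{(k)}_m}-\xi_{i_k}$, $e^{\phi^0_\sigma}=|a_{k,j^{(k)}_m}|\prod_{l\ne k}|\kappa_{i_l}-\kappa_{j^{(k)}_m}|/\prod_{l\ne k}|\kappa_{i_l}-\kappa_{i_k}|$, and $\tilde\phi_\sigma=\phi_\sigma+\phi^0_\sigma$. *)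

From HB Require Import structures.
From mathcomp Require Import all_boot all_order all_algebra.
From mathcomp Require Import reals sequences exp.
Set Implicit Arguments. Unset Strict Implicit. Unset Printing Implicit Defensive.
Import Order.TTheory GRing.Theory Num.Theory.
Local Open Scope ring_scope.

Definition xi (R : realType) (M : nat) (kappa : 'I_M -> R) (j : 'I_M) (x y t : R) : R :=
  kappa j * x + kappa j ^+ 2 * y + kappa j ^+ 3 * t.

Definition E_I (R : realType) (M : nat) (kappa : 'I_M -> R) (I : {set 'I_M}) (x y t : R) : R :=
  (\prod_(a in I) \prod_(b in I | (a < b)%N) (kappa b - kappa a))
  * expR (\sum_(j in I) xi kappa j x y t).

Definition minor (R : realType) (N M : nat) (A : 'M[R]_(N, M)) (I : {set 'I_M}) : R :=
  \det (\matrix_(i < N, k < N) nth 0 [seq A i j | j <- enum I] k).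

Definition tau (R : realType) (N M : nat) (kappa : 'I_M -> R) (A : 'M[R]_(N, M)) (x y t : R) : R :=
  \sum_(I : {set 'I_M} | #|I| == N) minor A I * E_I kappa I x y t.

Definition totally_nonnegative (R : realType) (N M : nat) (A : 'M[R]_(N, M)) : Prop :=
  forall I : {set 'I_M}, #|I| = N -> 0 <= minor A I.

Definition rref_with_pivots (R : realType) (N M : nat) (A : 'M[R]_(N, M)) (piv : 'I_N -> 'I_M) : Prop :=
  [/\ forall k l : 'I_N, (k < l)%N -> (piv k < piv l)%N,
      forall k : 'I_N, A k (piv k) = 1,
      forall k l : 'I_N, l != k -> A l (piv k) = 0
    & forall (k : 'I_N) (j : 'I_M), (j < piv k)%N -> A k j = 0].

Definition irreducible_rref (R : realType) (N M : nat) (A : 'M[R]_(N, M)) (piv : 'I_N -> 'I_M) : Prop :=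
  (forall k : 'I_N, exists j : 'I_M, j != piv k /\ A k j != 0) /\
  (forall j : 'I_M, exists k : 'I_N, A k j != 0).

Definition pivot_set (N M : nat) (piv : 'I_N -> 'I_M) : {set 'I_M} := [set piv k | k : 'I_N].

Definition entries (R : realType) (N M : nat) (A : 'M[R]_(N, M)) (piv : 'I_N -> 'I_M)
  : seq ('I_N * 'I_M) :=
  [seq (k, j) | k <- enum 'I_N,
                j <- [seq j <- enum 'I_M | (j \notin pivot_set piv) && (A k j != 0)]].

Definition gtilde (R : realType) (N M : nat) (A : 'M[R]_(N, M)) (piv : 'I_N -> 'I_M) : nat :=
  size (entries A piv).

Definition entry (R : realType) (N M : nat) (A : 'M[R]_(N, M)) (piv : 'I_N -> 'I_M)
  (s : 'I_(gtilde A piv)) : 'I_N * 'I_M :=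
  tnth (in_tuple (entries A piv)) s.

Definition b_ (R : realType) (N M : nat) (kappa : 'I_M -> R) (A : 'M[R]_(N, M)) (piv : 'I_N -> 'I_M)
  (s : 'I_(gtilde A piv)) : R := kappa (piv (entry s).1).

Definition c_ (R : realType) (N M : nat) (kappa : 'I_M -> R) (A : 'M[R]_(N, M)) (piv : 'I_N -> 'I_M)
  (s : 'I_(gtilde A piv)) : R := kappa (entry s).2.

Definition phi_ (R : realType) (N M : nat) (kappa : 'I_M -> R) (A : 'M[R]_(N, M)) (piv : 'I_N -> 'I_M)
  (s : 'I_(gtilde A piv)) (x y t : R) : R :=
  xi kappa (entry s).2 x y t - xi kappa (piv (entry s).1) x y t.

Definition phi0_ (R : realType) (N M : nat) (kappa : 'I_M -> R) (A : 'M[R]_(N, M)) (piv : 'I_N -> 'I_M)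
  (s : 'I_(gtilde A piv)) : R :=
  let k := (entry s).1 in let j := (entry s).2 in
  ln (`|A k j| * (\prod_(l : 'I_N | l != k) `|kappa (piv l) - kappa j|)
      / \prod_(l : 'I_N | l != k) `|kappa (piv l) - kappa (piv k)|).

Definition phit_ (R : realType) (N M : nat) (kappa : 'I_M -> R) (A : 'M[R]_(N, M)) (piv : 'I_N -> 'I_M)
  (s : 'I_(gtilde A piv)) (x y t : R) : R :=
  phi_ kappa s x y t + phi0_ kappa s.

Definition C_ (R : realType) (N M : nat) (kappa : 'I_M -> R) (A : 'M[R]_(N, M)) (piv : 'I_N -> 'I_M)
  (s r : 'I_(gtilde A piv)) : R :=
  ((b_ kappa s - b_ kappa r) * (c_ kappa s - c_ kappa r))
  / ((b_ kappa s - c_ kappa r) * (c_ kappa s - b_ kappa r)).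

(* theta~^{(g)}_g with 2 pi i z_sigma = phit_sigma; 0^0 = 1 via the nat power x ^+ 0 = 1 *)
Definition theta_tilde (R : realType) (g : nat) (C : 'I_g -> 'I_g -> R) (phit : 'I_g -> R) : R :=
  \sum_(m : {ffun 'I_g -> bool})
    (\prod_(s < g) \prod_(r < g | (s < r)%N) C s r ^+ (m s * m r)%N)
    * expR (\sum_(s < g) (m s)%:R * phit s).

(* Expanding every minor by the Leibniz formula writes tau_A as a sum, over
   all maps f : [N] -> [M], of
     (prod_k a_{k,f(k)}) Vandermonde(kappa o f) e^(sum_k xi_{f(k)}).
   Since column i_k of A is the k-th unit vector, only the maps sending each row
   k either to its pivot i_k or to a nonzero non-pivot entry of row k survive;
   they correspond to the vectors m in {0,1}^g~ choosing at most one entry per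
   row, and the other vectors m contribute 0 to the theta sum because C vanishes
   on two entries of one row.  For a surviving f, a Cauchy-type exchange identity
   factors Vandermonde(kappa o f) as Vandermonde(kappa o piv) times the cross
   ratios C of the chosen entries times one weight per chosen entry, and a_{k,j}
   times that weight is e^(phi^0) for the entry (k, j): it is positive because it
   is, up to positive factors, the minor of A on I_0 with i_k replaced by j. *)

From HB Require Import structures.
From mathcomp Require Import all_boot all_order all_algebra.
From mathcomp Require Import reals sequences exp.
From mathcomp Require Import fingroup perm ring.
Import Order.TTheory GRing.Theory Num.Theory.
Local Open Scope ring_scope.
Set Implicit Arguments. Unset Strict Implicit.

Lemma incr_ord_inj (d : Order.disp_t) (T : porderType d) n (f : 'I_n -> T) :
  (forall k l : 'I_n, (k < l)%N -> (f k < f l)%O) -> injective f.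
Proof.
move=> f_incr k l fkl; apply/val_inj/eqP; case: (ltngtP k l) => // kl.
- by have := f_incr _ _ kl; rewrite fkl ltxx.
- by have := f_incr _ _ kl; rewrite fkl ltxx.
Qed.

Lemma incr_ordmap_inj n m (e : 'I_n -> 'I_m) :
  (forall k l : 'I_n, (k < l)%N -> (e k < e l)%N) -> injective e.
Proof.
by move=> e_incr; apply: (@inj_compr _ _ _ val); apply: (incr_ord_inj (T := nat)).
Qed.

Lemma incr_ordmap_ltn n m (e : 'I_n -> 'I_m) :
  (forall k l : 'I_n, (k < l)%N -> (e k < e l)%N) ->
  forall k l : 'I_n, (e k < e l)%N = (k < l)%N.
Proof.
move=> e_incr k l; case: (ltngtP k l) => [kl|lk|/val_inj ->]; first exact: e_incr.
  by apply/negbTE; rewrite -leqNgt ltnW ?e_incr.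
by rewrite ltnn.
Qed.

Lemma sorted_enum_ltn n : sorted (fun a b : 'I_n => (a < b)%N) (enum 'I_n).
Proof.
have : sorted ltn (map val (enum 'I_n)) by rewrite val_enum_ord iota_ltn_sorted.
by rewrite sorted_map.
Qed.

Lemma sorted_enum_set_ltn n (I : {set 'I_n}) :
  sorted (fun a b : 'I_n => (a < b)%N) (enum I).
Proof.
rewrite /enum_mem -enumT; apply: sorted_filter (sorted_enum_ltn n).
by move=> a b c; apply: ltn_trans.
Qed.

Lemma prod_offdiag_pairs (R : comPzRingType) n (F : 'I_n -> 'I_n -> R) :
  \prod_(k < n) \prod_(l < n | l != k) F k l =
  \prod_(k < n) \prod_(l < n | (k < l)%N) (F k l * F l k).
Proof.
have split_neq k : \prod_(l < n | l != k) F k l =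
    \prod_(l < n | (k < l)%N) F k l * \prod_(l < n | (l < k)%N) F k l.
  rewrite (bigID (fun l : 'I_n => (k < l)%N)) /=; congr (_ * _); apply: eq_bigl => l.
    by rewrite andb_idl // => kl; rewrite neq_ltn kl orbT.
  by rewrite -leqNgt [RHS]ltn_neqAle.
rewrite (eq_bigr _ (fun k _ => split_neq k)) big_split /=.
under [RHS]eq_bigr do rewrite big_split /=.
rewrite big_split /=; congr (_ * _).
under eq_bigr do rewrite big_mkcond /=.
rewrite exchange_big /=; apply: eq_bigr => l _; exact/esym/big_mkcond.
Qed.

Lemma prod_sym_pairs_rank (R : comPzRingType) n (S : pred 'I_n)
    (G : 'I_n -> 'I_n -> R) (rk : 'I_n -> nat) :
  (forall s r, G s r = G r s) -> {in S &, injective rk} ->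
  \prod_(s | S s) \prod_(r | S r && (s < r)%N) G s r =
  \prod_(s | S s) \prod_(r | S r && (rk s < rk r)%N) G s r.
Proof.
move=> G_sym rk_inj; rewrite !pair_big_dep /=.
rewrite (bigID (fun p : 'I_n * 'I_n => (rk p.1 < rk p.2)%N)) /=.
rewrite [RHS](bigID (fun p : 'I_n * 'I_n => (p.1 < p.2)%N)) /=; congr (_ * _).
  by apply: eq_bigl => -[a b] /=; case: (S a); case: (S b); rewrite //= andbC.
rewrite (reindex_inj (h := fun p : 'I_n * 'I_n => (p.2, p.1))) /=; last first.
  by move=> [a b] [c d] /= [-> ->].
apply: eq_big => [[a b]|[a b] _] /=; last exact: G_sym.
case Sa: (S a); case Sb: (S b) => //=.
have [<-|a_neq_b] := eqVneq a b; first by rewrite !ltnn.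
have : rk a != rk b by apply: contra a_neq_b => /eqP/(rk_inj _ _ Sa Sb) ->.
case: (ltngtP (rk a) (rk b)); case: (ltngtP a b) => // /val_inj eq_ab.
by rewrite eq_ab eqxx in a_neq_b.
Qed.

Lemma prod_pairs_pow_mask (R : comPzRingType) n (m : 'I_n -> bool) (G : 'I_n -> 'I_n -> R) :
  \prod_(s < n) \prod_(r < n | (s < r)%N) G s r ^+ (m s * m r)%N =
  \prod_(s | m s) \prod_(r | m r && (s < r)%N) G s r.
Proof.
rewrite (bigID m) /= [X in _ * X]big1 ?mulr1 => [|s /negbTE ms]; last first.
  by apply: big1 => r _; rewrite ms.
apply: eq_bigr => s ms; rewrite [RHS]big_mkcondl; apply: eq_bigr => r _.
by rewrite ms; case: (m r).
Qed.

Definition vandermonde_prod (R : comPzRingType) n (h : 'I_n -> R) : R :=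
  \prod_(a < n) \prod_(b < n | (a < b)%N) (h b - h a).

Lemma vandermonde_prod_perm (R : comPzRingType) n (h : 'I_n -> R) (s : 'S_n) :
  vandermonde_prod (fun k => h (s k)) = (-1) ^+ s * vandermonde_prod h.
Proof.
have vdm_det (g : 'I_n -> R) : vandermonde_prod g = \det (Vandermonde n (\row_j g j)).
  by rewrite det_Vandermonde; apply: eq_bigr => a _; apply: eq_bigr => b _; rewrite !mxE.
rewrite !vdm_det (_ : Vandermonde _ _ = col_perm s (Vandermonde n (\row_j h j))).
  by rewrite col_permE det_mulmx det_perm odd_permV mulrC.
by apply/matrixP => i j; rewrite !mxE.
Qed.

Lemma vandermonde_prod_eq0 (R : comPzRingType) n (h : 'I_n -> R) :
  ~~ injectiveb h -> vandermonde_prod h = 0.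
Proof.
case/injectivePn => a [b]; wlog ab : a b / (a < b)%N => [W|_ hab].
  case: (ltngtP a b) => [ab|ba|/val_inj ->]; [exact: W | | by rewrite eqxx].
  by rewrite eq_sym => ne /esym; apply: W.
by rewrite /vandermonde_prod (bigD1 a) //= (bigD1 b) //= hab subrr !mul0r.
Qed.

Section VandermondeExchange.
Variables (F : fieldType) (n : nat) (x y : 'I_n -> F).

Definition cross_ratio k l :=
  ((y k - y l) * (x k - x l)) / ((y k - x l) * (x k - y l)).

Definition lagrange_weight k :=
  (\prod_(l < n | l != k) (y l - x k)) / \prod_(l < n | l != k) (y l - y k).

Hypothesis y_inj : injective y.
Hypothesis xy_neq : forall k l, k != l -> x k != y l.

(* Grouping the factors of both sides by unordered pairs {k, l} leaves one
   rational identity per pair. *)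
Lemma vandermonde_prod_exchange :
  vandermonde_prod x =
  vandermonde_prod y * \prod_(k < n) \prod_(l < n | (k < l)%N) cross_ratio k l
  * \prod_(k < n) lagrange_weight k.
Proof.
have -> : \prod_k lagrange_weight k =
    \prod_(k < n) \prod_(l < n | l != k) ((y l - x k) / (y l - y k)).
  by apply: eq_bigr => k _; rewrite big_split /= prodfV.
rewrite prod_offdiag_pairs /vandermonde_prod -!big_split /=; apply: eq_bigr => k _.
rewrite -!big_split /=; apply: eq_bigr => l kl.
have [nkl nlk] : k != l /\ l != k by split; rewrite neq_ltn kl ?orbT.
have ykl : y k != y l by rewrite (inj_eq y_inj).
have := xy_neq nkl; have := xy_neq nlk; rewrite /cross_ratio => xyl xyk; field.
by rewrite !subr_eq0 ykl xyk eq_sym ykl eq_sym xyl.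
Qed.

Lemma lagrange_weight_fixed k : x k = y k -> lagrange_weight k = 1.
Proof.
move=> xyk; rewrite /lagrange_weight xyk divff // prodf_seq_neq0.
by apply/allP => l _; apply/implyP => lk; rewrite subr_eq0 (inj_eq y_inj).
Qed.

Lemma lagrange_weight_neq0 k : lagrange_weight k != 0.
Proof.
rewrite /lagrange_weight mulf_neq0 ?invr_eq0 // prodf_seq_neq0;
  apply/allP => l _; apply/implyP => lk; rewrite subr_eq0.
  by rewrite eq_sym xy_neq // eq_sym.
by rewrite (inj_eq y_inj).
Qed.

Lemma cross_ratio_fixed k l :
  k != l -> x k = y k \/ x l = y l -> cross_ratio k l = 1.
Proof.
move=> kl xy_fixed; have lk : l != k by rewrite eq_sym.
have ykl : y k != y l by rewrite (inj_eq y_inj).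
have := xy_neq kl; have := xy_neq lk; rewrite /cross_ratio => xylk xykl.
case: xy_fixed => ->.
  by rewrite [X in _ / X]mulrC divff // mulf_neq0 // subr_eq0 // eq_sym.
by rewrite divff // mulf_neq0 // subr_eq0.
Qed.

End VandermondeExchange.

Lemma enum_imset_incr n m (e : 'I_n -> 'I_m) :
  (forall k l : 'I_n, (k < l)%N -> (e k < e l)%N) ->
  enum [set e k | k : 'I_n] = map e (enum 'I_n).
Proof.
move=> e_incr; apply: (@irr_sorted_eq _ (fun a b : 'I_m => (a < b)%N)).
- by move=> a b c; apply: ltn_trans.
- by move=> a; rewrite ltnn.
- exact: sorted_enum_set_ltn.
- by rewrite sorted_map; apply: sub_sorted (sorted_enum_ltn n) => a b /e_incr.
- by move=> z; rewrite mem_enum; apply/imsetP/mapP => -[k]; exists k; rewrite ?mem_enum.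
Qed.

Lemma card_set_incr_imset n m (I : {set 'I_m}) (i0 : 'I_m) : #|I| = n ->
  exists2 e : 'I_n -> 'I_m,
    (forall k l : 'I_n, (k < l)%N -> (e k < e l)%N) & I = [set e k | k : 'I_n].
Proof.
move=> cardI; have size_enum : size (enum I) = n by rewrite -cardE.
pose e (k : 'I_n) := nth i0 (enum I) k.
have e_incr (k l : 'I_n) : (k < l)%N -> (e k < e l)%N.
  move=> kl; apply: (sorted_ltn_nth (leT := fun a b : 'I_m => (a < b)%N)) kl.
  - by move=> a b c; apply: ltn_trans.
  - exact: sorted_enum_set_ltn.
  - by rewrite inE size_enum.
  - by rewrite inE size_enum.
have e_inj := incr_ordmap_inj e_incr.
exists e => //; apply/eqP; rewrite eq_sym eqEcard card_imset // card_ord cardI leqnn andbT.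
by apply/subsetP => _ /imsetP [k _ ->]; rewrite -mem_enum mem_nth ?size_enum.
Qed.

Lemma imset_eq_perm n m (e : 'I_n -> 'I_m) (f : {ffun 'I_n -> 'I_m}) :
  injective e ->
  ([set f k | k : 'I_n] == [set e k | k : 'I_n]) =
  (f \in [set [ffun k => e (s k)] | s : 'S_n]).
Proof.
move=> e_inj; apply/eqP/imsetP => [im_fe|[s _ ->]]; last first.
  apply/setP => z; apply/imsetP/imsetP => -[k _ ->]; rewrite ?ffunE.
    by exists (s k).
  by exists ((s^-1)%g k); rewrite ?ffunE ?permKV.
have f_inj : injective f.
  have : #|[set f k | k : 'I_n]| == #|'I_n| by rewrite im_fe card_imset.
  by move/imset_injP => f_inj a b; apply: f_inj.
have fk_im k : exists k', e k' == f k.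
  have : f k \in [set e k | k : 'I_n] by rewrite -im_fe imset_f.
  by case/imsetP => k' _ ->; exists k'.
pose g k := odflt k [pick k' | e k' == f k].
have egE k : e (g k) = f k.
  rewrite /g; case: pickP => [k' /eqP //|no_k].
  by case: (fk_im k) => k'; rewrite no_k.
have g_inj : injective g by move=> a b gab; apply: f_inj; rewrite -!egE gab.
by exists (perm g_inj) => //; apply/ffunP => k; rewrite ffunE permE egE.
Qed.

Section LeibnizExpansion.
Variables (R : realType) (N M : nat) (kappa : 'I_M -> R) (A : 'M[R]_(N, M)) (x y t : R).

Definition leibniz_term (f : {ffun 'I_N -> 'I_M}) : R :=
  (\prod_k A k (f k)) * vandermonde_prod (fun k => kappa (f k))
  * expR (\sum_k xi kappa (f k) x y t).

Lemma E_I_incr_imset (e : 'I_N -> 'I_M) :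
  (forall k l : 'I_N, (k < l)%N -> (e k < e l)%N) ->
  E_I kappa [set e k | k : 'I_N] x y t =
  vandermonde_prod (fun k => kappa (e k)) * expR (\sum_k xi kappa (e k) x y t).
Proof.
move=> e_incr; have e_inj := incr_ordmap_inj e_incr.
have e_injin : {in 'I_N &, injective e} by move=> a b _ _ /e_inj.
rewrite /E_I !big_imset //=; congr (_ * _); apply: eq_bigr => k _.
rewrite big_mkcondr big_imset //= [RHS]big_mkcond; apply: eq_bigr => l _.
by rewrite incr_ordmap_ltn.
Qed.

Lemma minor_incr_imset (e : 'I_N -> 'I_M) :
  (forall k l : 'I_N, (k < l)%N -> (e k < e l)%N) ->
  minor A [set e k | k : 'I_N] = \det (\matrix_(i, k) A i (e k)).
Proof.
move=> e_incr; rewrite /minor enum_imset_incr //.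
congr (\det _); apply/matrixP => i k; rewrite !mxE -map_comp.
by rewrite (nth_map k) ?size_enum_ord // nth_ord_enum.
Qed.

Lemma minor_leibniz (I : {set 'I_M}) (i0 : 'I_M) : #|I| = N ->
  minor A I * E_I kappa I x y t =
  \sum_(f : {ffun 'I_N -> 'I_M} | [set f k | k : 'I_N] == I) leibniz_term f.
Proof.
move=> /(card_set_incr_imset i0) [e e_incr ->]; have e_inj := incr_ordmap_inj e_incr.
rewrite minor_incr_imset // E_I_incr_imset //.
rewrite (eq_bigl _ _ (fun f => imset_eq_perm f e_inj)) big_imset /=; last first.
  move=> s s' _ _ /ffunP ss'; apply/permP => k.
  by have := ss' k; rewrite !ffunE => /e_inj.
rewrite /determinant big_distrl /=; apply: eq_bigr => s _.
have perm_vdm : vandermonde_prod (fun k => kappa ([ffun k => e (s k)] k)) =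
    (-1) ^+ s * vandermonde_prod (fun k => kappa (e k)).
  rewrite -vandermonde_prod_perm; apply: eq_bigr => a _; apply: eq_bigr => b _.
  by rewrite !ffunE.
have perm_phase : \sum_k xi kappa ([ffun k => e (s k)] k) x y t =
    \sum_k xi kappa (e k) x y t.
  by rewrite [RHS](reindex_inj (@perm_inj _ s)); apply: eq_bigr => k _; rewrite ffunE.
rewrite /leibniz_term perm_vdm perm_phase; under eq_bigr do rewrite mxE.
under [in RHS]eq_bigr do rewrite ffunE.
by rewrite !mulrA [(-1) ^+ s * _]mulrC.
Qed.

Lemma leibniz_term_noninj (f : {ffun 'I_N -> 'I_M}) :
  ~~ injectiveb f -> leibniz_term f = 0.
Proof.
move=> f_ninj; rewrite /leibniz_term vandermonde_prod_eq0 ?mulr0 ?mul0r //.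
by apply: contra f_ninj => /injectiveP /inj_compr /injectiveP.
Qed.

Lemma tau_leibniz (i0 : 'I_M) :
  tau kappa A x y t = \sum_(f : {ffun 'I_N -> 'I_M}) leibniz_term f.
Proof.
rewrite (bigID (fun f : {ffun 'I_N -> 'I_M} => injectiveb f)) /=.
rewrite [X in _ = _ + X]big1 ?addr0 => [|f /leibniz_term_noninj //].
rewrite (partition_big (fun f : {ffun 'I_N -> 'I_M} => [set f k | k : 'I_N])
   (fun I : {set 'I_M} => #|I| == N)) /=; last first.
  by move=> f /injectiveP f_inj; rewrite card_imset // card_ord.
apply: eq_bigr => I /eqP cardI; rewrite (minor_leibniz i0 cardI).
apply: eq_bigl => f; rewrite andb_idl // => /eqP im_f.
have : #|[set f k | k : 'I_N]| == #|'I_N| by rewrite im_f cardI card_ord.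
by move/imset_injP => f_inj; apply/injectiveP => a b; apply: f_inj.
Qed.

End LeibnizExpansion.

Section Selections.
Variables (R : realType) (N M : nat) (kappa : 'I_M -> R) (A : 'M[R]_(N, M)).
Variables (piv : 'I_N -> 'I_M) (x y t : R).
Local Notation g := (gtilde A piv).

Hypothesis kappa_incr : forall i j : 'I_M, (i < j)%N -> kappa i < kappa j.
Hypothesis piv_incr : forall k l : 'I_N, (k < l)%N -> (piv k < piv l)%N.
Hypothesis A_piv1 : forall k, A k (piv k) = 1.
Hypothesis A_piv0 : forall k l, l != k -> A l (piv k) = 0.
Hypothesis A_tnn : totally_nonnegative A.

Lemma mem_pivot_set k : piv k \in pivot_set piv.
Proof. exact: imset_f. Qed.

Lemma mem_entries k j :
  ((k, j) \in entries A piv) = (j \notin pivot_set piv) && (A k j != 0).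
Proof.
apply/allpairsPdep/idP => [[k' [j' [_ + [-> ->]]]]|entry_kj].
  by rewrite mem_filter => /andP [].
by exists k, j; rewrite mem_enum mem_filter entry_kj mem_enum.
Qed.

Lemma entryP (s : 'I_g) :
  ((entry s).2 \notin pivot_set piv) && (A (entry s).1 (entry s).2 != 0).
Proof. by rewrite -mem_entries -surjective_pairing mem_tnth. Qed.

Lemma entry_inj : injective (@entry R N M A piv).
Proof.
have uniq_entries : uniq (entries A piv).
  apply: allpairs_uniq_dep => [||[k1 j1] [k2 j2] _ _ /= [-> ->]] //.
  - exact: enum_uniq.
  - by move=> k _; apply/filter_uniq/enum_uniq.
move=> s r; rewrite /entry !(tnth_nth (entry s)) /= => /eqP.
by rewrite nth_uniq // => /eqP/val_inj.
Qed.

Lemma entry_pair_inj (s r : 'I_g) :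
  (entry s).1 = (entry r).1 -> (entry s).2 = (entry r).2 -> s = r.
Proof.
move=> eq1 eq2; apply: entry_inj.
by rewrite [entry s]surjective_pairing eq1 eq2 -surjective_pairing.
Qed.

Lemma entry_onto k j :
  j \notin pivot_set piv -> A k j != 0 -> exists s : 'I_g, entry s = (k, j).
Proof.
move=> j_npiv Akj; have kj_in : (k, j) \in entries A piv by rewrite mem_entries j_npiv.
have lt_index : (index (k, j) (entries A piv) < g)%N by rewrite index_mem.
by exists (Ordinal lt_index); rewrite /entry (tnth_nth (k, j)) nth_index.
Qed.

Definition admissible (f : {ffun 'I_N -> 'I_M}) : bool :=
  [forall k, (f k == piv k) || ((f k \notin pivot_set piv) && (A k (f k) != 0))].

Definition selection (f : {ffun 'I_N -> 'I_M}) : {ffun 'I_g -> bool} :=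
  [ffun s => f (entry s).1 == (entry s).2].

Definition selected_map (m : {ffun 'I_g -> bool}) : {ffun 'I_N -> 'I_M} :=
  [ffun k => if [pick s | m s && ((entry s).1 == k)] is Some s then (entry s).2
             else piv k].

Definition one_per_row (m : {ffun 'I_g -> bool}) : bool :=
  [forall s, forall r, [&& m s, m r & (entry s).1 == (entry r).1] ==> (s == r)].

Lemma selected_map_admissible m : admissible (selected_map m).
Proof.
apply/forallP => k; rewrite ffunE; case: pickP => [s /andP [_ /eqP <-]|_].
  by rewrite entryP orbT.
by rewrite eqxx.
Qed.

Lemma admissible_moved f k : admissible f -> f k != piv k ->
  (f k \notin pivot_set piv) && (A k (f k) != 0).
Proof. by move=> /forallP/(_ k)/orP [/eqP ->|//]; rewrite eqxx. Qed.

Lemma selection_row_inj f :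
  {in [pred s | selection f s] &, injective (fun s => (entry s).1)}.
Proof.
move=> s r; rewrite !inE !ffunE => /eqP fs /eqP fr sr.
by apply: entry_pair_inj (sr) _; rewrite -fs -fr sr.
Qed.

Lemma selectionK f : admissible f -> selected_map (selection f) = f.
Proof.
move=> f_adm; apply/ffunP => k; rewrite ffunE; case: pickP => [s|no_s].
  by rewrite ffunE => /andP [/eqP fs /eqP <-].
have [/eqP -> //|fk_moved] := boolP (f k == piv k).
have /andP [fk_npiv Akfk] := admissible_moved f_adm fk_moved.
have [s sE] := entry_onto fk_npiv Akfk.
by have := no_s s; rewrite ffunE sE /= !eqxx.
Qed.

Lemma selected_mapK m : one_per_row m -> selection (selected_map m) = m.
Proof.
move=> /forallP m_row; apply/ffunP => s; rewrite !ffunE.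
case: pickP => [r /andP [mr /eqP rs]|no_r].
  have [<-|r_neq_s] := eqVneq r s; first by rewrite eqxx mr.
  have -> : m s = false.
    apply: contraNF r_neq_s => ms.
    by have /forallP/(_ r)/implyP := m_row s; rewrite ms mr rs eqxx eq_sym; apply.
  by apply/negbTE; apply: contra r_neq_s => /eqP r2s; apply/eqP/entry_pair_inj.
case ms: (m s); first by have := no_r s; rewrite ms eqxx.
have /andP [s_npiv _] := entryP s.
by apply/negbTE; apply: contraNneq s_npiv => <-; rewrite mem_pivot_set.
Qed.

Definition theta_summand (m : {ffun 'I_g -> bool}) : R :=
  (\prod_(s < g) \prod_(r < g | (s < r)%N) C_ kappa s r ^+ (m s * m r)%N)
  * expR (\sum_(s < g) (m s)%:R * phit_ kappa s x y t).

Lemma theta_summand_row_clash m : ~~ one_per_row m -> theta_summand m = 0.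
Proof.
case/forallPn => s /forallPn [r]; rewrite negb_imply => /andP [/and3P [ms mr rs] sr].
wlog lt_sr : s r ms mr rs sr / (s < r)%N => [W|].
  case: (ltngtP s r) => [|lt_rs|/val_inj eq_sr]; first exact: W.
    by apply: (W r s); rewrite // eq_sym.
  by rewrite eq_sr eqxx in sr.
have C0 : C_ kappa s r = 0 by rewrite /C_ /b_ (eqP rs) subrr !mul0r.
by rewrite /theta_summand (bigD1 s) //= (bigD1 r) //= ms mr C0 expr1 !mul0r.
Qed.

Lemma leibniz_term_nonadmissible f :
  ~~ admissible f -> leibniz_term kappa A x y t f = 0.
Proof.
case/forallPn => k; rewrite negb_or => /andP [fk_neq fk_bad].
suff Akfk0 : A k (f k) = 0 by rewrite /leibniz_term (bigD1 k) //= Akfk0 !mul0r.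
have [/imsetP [l _ fkE]|fk_npiv] := boolP (f k \in pivot_set piv).
  by rewrite fkE A_piv0 //; apply: contraNneq fk_neq => kl; rewrite fkE kl.
by move: fk_bad; rewrite fk_npiv /= negbK => /eqP.
Qed.

Lemma sum_leibniz_admissible (E0 : R) :
  (forall f, admissible f -> leibniz_term kappa A x y t f = E0 * theta_summand (selection f)) ->
  \sum_(f : {ffun 'I_N -> 'I_M}) leibniz_term kappa A x y t f =
  E0 * \sum_(m : {ffun 'I_g -> bool}) theta_summand m.
Proof.
move=> adm_factor.
rewrite (partition_big selected_map (fun _ => true)) //= big_distrr /=.
apply: eq_bigr => f _; have [f_adm|f_nadm] := boolP (admissible f); last first.
  rewrite leibniz_term_nonadmissible // big1 ?mulr0 // => m /eqP fE.
  by move: f_nadm; rewrite -fE selected_map_admissible.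
rewrite (bigD1 (selection f)) /= ?selectionK // big1 ?addr0; first exact: adm_factor.
move=> m /andP [/eqP <- m_neq]; apply: theta_summand_row_clash.
by apply: contra m_neq => /selected_mapK ->.
Qed.

Lemma big_selection_rows f (T : Type) (idx : T) (op : Monoid.com_law idx) (H : 'I_N -> T) :
  admissible f ->
  \big[op/idx]_(s | selection f s) H (entry s).1 = \big[op/idx]_(k | f k != piv k) H k.
Proof.
move=> f_adm; pose S := [pred s | selection f s].
have rows_S : [set (entry s).1 | s in S] = [set k | f k != piv k].
  apply/setP => k; rewrite inE; apply/imsetP/idP => [[s]|fk_moved].
    rewrite inE ffunE => /eqP fs ->; have /andP [s_npiv _] := entryP s.
    by apply: contraNneq s_npiv => fs_piv; rewrite -fs fs_piv mem_pivot_set.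
  have /andP [fk_npiv Akfk] := admissible_moved f_adm fk_moved.
  have [s sE] := entry_onto fk_npiv Akfk.
  by exists s; rewrite ?inE ?ffunE sE ?eqxx.
rewrite (eq_bigl (fun k => k \in [set (entry s).1 | s in S])) => [|k]; last first.
  by rewrite rows_S inE.
rewrite big_imset /=; last exact: selection_row_inj.
by apply: eq_bigl => s; rewrite inE.
Qed.

(* [e^(phi0_ s) = |A k j * pivot_weight k j|] for the entry s = (k, j). *)
Definition pivot_weight k j : R :=
  (\prod_(l < N | l != k) (kappa (piv l) - kappa j))
  / \prod_(l < N | l != k) (kappa (piv l) - kappa (piv k)).

Let kappa_inj : injective kappa := incr_ord_inj kappa_incr.
Let piv_inj : injective piv := incr_ordmap_inj piv_incr.
Let piv_nodes_inj : injective (fun k => kappa (piv k)) := inj_comp kappa_inj piv_inj.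

Lemma admissible_nodes f : admissible f ->
  forall k l, k != l -> kappa (f k) != kappa (piv l).
Proof.
move=> /forallP f_adm k l kl; rewrite (inj_eq kappa_inj).
case/orP: (f_adm k) => [/eqP ->|/andP [fk_npiv _]].
  by rewrite (inj_eq piv_inj).
by apply: contraNneq fk_npiv => ->; rewrite mem_pivot_set.
Qed.

Lemma leibniz_term_admissible f : admissible f ->
  leibniz_term kappa A x y t f =
  E_I kappa (pivot_set piv) x y t
  * \prod_(k < N) \prod_(l < N | (k < l)%N)
      cross_ratio (fun k => kappa (f k)) (fun k => kappa (piv k)) k l
  * \prod_(k | f k != piv k)
      (A k (f k) * pivot_weight k (f k) * expR (xi kappa (f k) x y t - xi kappa (piv k) x y t)).
Proof.
move=> f_adm; have nodes_neq := admissible_nodes f_adm.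
have moved_weights : \prod_k A k (f k)
    * \prod_k lagrange_weight (fun k => kappa (f k)) (fun k => kappa (piv k)) k
    = \prod_(k | f k != piv k) (A k (f k) * pivot_weight k (f k)).
  rewrite -big_split [\prod_(k | _) _]big_rmcond => [//|k /negPn/eqP fk].
  have := lagrange_weight_fixed (x := fun k => kappa (f k)) (k := k) piv_nodes_inj.
  by rewrite /lagrange_weight /pivot_weight fk A_piv1 mul1r => /(_ erefl) ->.
have moved_phases : expR (\sum_k xi kappa (f k) x y t) =
    expR (\sum_k xi kappa (piv k) x y t)
    * \prod_(k | f k != piv k) expR (xi kappa (f k) x y t - xi kappa (piv k) x y t).
  rewrite [\prod_(k | _) _]big_rmcond => [|k /negPn/eqP ->]; last by rewrite subrr expR0.
  rewrite -expR_sum -expRD -big_split /=.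
  by congr expR; apply: eq_bigr => k _; rewrite addrC subrK.
rewrite /leibniz_term (vandermonde_prod_exchange piv_nodes_inj nodes_neq).
rewrite /pivot_set E_I_incr_imset // moved_phases.
rewrite [\prod_(k | f k != piv k) (_ * _ * _)]big_split /= -moved_weights.
by ring.
Qed.

Lemma C_sym s r : C_ kappa (A := A) (piv := piv) s r = C_ kappa r s.
Proof.
rewrite /C_; congr (_ / _); first by rewrite -mulrNN !opprB.
by rewrite mulrC -mulrNN !opprB.
Qed.

Lemma prod_C_selection f : admissible f ->
  \prod_(s < g) \prod_(r < g | (s < r)%N) C_ kappa s r ^+ (selection f s * selection f r)%N =
  \prod_(k < N) \prod_(l < N | (k < l)%N)
    cross_ratio (fun k => kappa (f k)) (fun k => kappa (piv k)) k l.
Proof.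
move=> f_adm; set cr := cross_ratio _ _.
have nodes_neq := admissible_nodes f_adm.
have fE s : selection f s -> f (entry s).1 = (entry s).2 by rewrite ffunE => /eqP.
have row_inj : {in [pred s | selection f s] &, injective (fun s => val (entry s).1)}.
  by move=> s r fs fr /val_inj; apply: (selection_row_inj fs fr).
(* C is symmetric, so the pairs of chosen entries may be ordered by rows. *)
rewrite prod_pairs_pow_mask (prod_sym_pairs_rank C_sym row_inj).
have C_cr s r : selection f s -> selection f r ->
    C_ kappa s r = cr (entry s).1 (entry r).1.
  by move=> fs fr; rewrite /C_ /b_ /c_ /cr /cross_ratio -(fE s) // -(fE r).
transitivity (\prod_(s | selection f s) \prod_(r | selection f r)
    (if ((entry s).1 < (entry r).1)%N then cr (entry s).1 (entry r).1 else 1)).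
  apply: eq_bigr => s fs; rewrite big_mkcondr; apply: eq_bigr => r fr.
  by case: ifP => // _; rewrite C_cr.
under eq_bigr do rewrite (big_selection_rows _ (fun l => if (_ < l)%N then cr _ l else 1) f_adm).
rewrite (big_selection_rows _
  (fun k => \prod_(l | f l != piv l) if (k < l)%N then cr k l else 1)) //.
rewrite big_rmcond => [|k /negPn/eqP fk]; last first.
  apply: big1 => l _; case: ifP => // kl.
  by apply: (cross_ratio_fixed piv_nodes_inj nodes_neq); [rewrite neq_ltn kl | left; rewrite fk].
apply: eq_bigr => k _; rewrite big_rmcond => [|l /negPn/eqP fl]; last first.
  case: ifP => // kl.
  by apply: (cross_ratio_fixed piv_nodes_inj nodes_neq); [rewrite neq_ltn kl | right; rewrite fl].
by rewrite [RHS]big_mkcond.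
Qed.

Lemma sum_phit_selection f : admissible f ->
  \sum_(s < g) (selection f s)%:R * phit_ kappa s x y t =
  \sum_(k | f k != piv k) (xi kappa (f k) x y t - xi kappa (piv k) x y t
                           + ln `|A k (f k) * pivot_weight k (f k)|).
Proof.
move=> f_adm; rewrite -(big_selection_rows _ (fun k => xi kappa (f k) x y t
    - xi kappa (piv k) x y t + ln `|A k (f k) * pivot_weight k (f k)|)) //.
rewrite [RHS]big_mkcond; apply: eq_bigr => s _; rewrite ffunE.
have [fs|_] := eqVneq; last by rewrite mul0r.
rewrite mul1r /phit_ /phi_ /phi0_ fs normrM normf_div !normr_prod.
by rewrite mulrA.
Qed.

Lemma E_I_ge0 (I : {set 'I_M}) : 0 <= E_I kappa I x y t.
Proof.
rewrite /E_I mulr_ge0 ?expR_ge0 //; apply: prodr_ge0 => a _.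
by apply: prodr_ge0 => b /andP [_ ab]; rewrite subr_ge0 ltW // kappa_incr.
Qed.

Lemma E_I_pivots_gt0 : 0 < E_I kappa (pivot_set piv) x y t.
Proof.
rewrite /pivot_set E_I_incr_imset // mulr_gt0 ?expR_gt0 //.
apply: prodr_gt0 => a _; apply: prodr_gt0 => b ab.
by rewrite subr_gt0 kappa_incr // piv_incr.
Qed.

Section ReplacePivot.
Variables (k : 'I_N) (j : 'I_M).
Hypotheses (j_npiv : j \notin pivot_set piv) (Akj : A k j != 0).

Definition replace_pivot : {ffun 'I_N -> 'I_M} :=
  [ffun l => if l == k then j else piv l].

Lemma replace_pivot_admissible : admissible replace_pivot.
Proof.
apply/forallP => l; rewrite !ffunE; case: (l =P k) => [->|_]; last by rewrite eqxx.
by rewrite j_npiv Akj orbT.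
Qed.

Lemma replace_pivot_inj : injective replace_pivot.
Proof.
have j_neq l : j != piv l by apply: contraNneq j_npiv => ->; rewrite mem_pivot_set.
move=> a b; rewrite !ffunE; case: eqP => [->|_]; case: eqP => [->|_] //.
- by move/eqP; rewrite (negbTE (j_neq b)).
- by move/esym/eqP; rewrite (negbTE (j_neq a)).
- exact: piv_inj.
Qed.

Lemma admissible_imset_replace_pivot f : admissible f ->
  [set f l | l : 'I_N] = [set replace_pivot l | l : 'I_N] -> f = replace_pivot.
Proof.
move=> /forallP f_adm im_f.
have f_piv l : f l \in pivot_set piv -> f l = piv l.
  by case/orP: (f_adm l) => [/eqP //|/andP [/negbTE ->]].
have f_inj : injective f.
  have : #|[set f l | l : 'I_N]| == #|'I_N|.
    by rewrite im_f card_imset //; apply: replace_pivot_inj.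
  by move/imset_injP => f_inj a b; apply: f_inj.
have f_im l : exists l', f l = replace_pivot l'.
  have : f l \in [set replace_pivot l | l : 'I_N] by rewrite -im_f imset_f.
  by case/imsetP => l' _ ->; exists l'.
have fk : f k = j.
  have [l'] := f_im k; rewrite ffunE; case: eqP => // /eqP l'k fk_piv.
  have /piv_inj l'kE : piv l' = piv k.
    by rewrite -fk_piv f_piv // fk_piv mem_pivot_set.
  by rewrite l'kE eqxx in l'k.
apply/ffunP => l; rewrite ffunE; case: eqP => [-> //|lk].
case: (f_im l) => l'; rewrite ffunE; case: eqP => [_ fl|_ fl].
  by rewrite -fk in fl; case: lk; apply: f_inj.
by apply: f_piv; rewrite fl mem_pivot_set.
Qed.

End ReplacePivot.

Lemma pivot_weight_pos k j : j \notin pivot_set piv -> A k j != 0 ->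
  0 < A k j * pivot_weight k j.
Proof.
move=> j_npiv Akj; set f0 := replace_pivot k j.
have f0_adm : admissible f0 := replace_pivot_admissible j_npiv Akj.
have card_f0 : #|[set f0 l | l : 'I_N]| = N.
  by rewrite card_imset ?card_ord //; apply: replace_pivot_inj.
have := minor_leibniz kappa A x y t j card_f0.
rewrite (bigD1 f0) //= big1 ?addr0 => [minorE|f /andP [/eqP im_f f_neq]]; last first.
  have [f_adm|f_nadm] := boolP (admissible f); last exact: leibniz_term_nonadmissible.
  by rewrite (admissible_imset_replace_pivot j_npiv f_adm im_f) eqxx in f_neq.
have : 0 <= leibniz_term kappa A x y t f0.
  by rewrite -minorE mulr_ge0 ?E_I_ge0 ?A_tnn.
have cr1 : \prod_(a < N) \prod_(b < N | (a < b)%N)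
    cross_ratio (fun l => kappa (f0 l)) (fun l => kappa (piv l)) a b = 1.
  apply: big1 => a _; apply: big1 => b ab.
  apply: cross_ratio_fixed; rewrite ?neq_ltn ?ab //; first exact: admissible_nodes.
  rewrite !ffunE; case: (a =P k) => [ak|]; last by left.
  by right; case: (b =P k) => // bk; rewrite bk ak ltnn in ab.
have moved_k (F : 'I_N -> R) : \prod_(l | f0 l != piv l) F l = F k.
  rewrite (eq_bigl (pred1 k)) ?big_pred1_eq // => l; rewrite ffunE /=.
  case: (l =P k) => [->|_]; last by rewrite eqxx.
  by apply: contraNneq j_npiv => ->; rewrite mem_pivot_set.
have w_neq0 : pivot_weight k j != 0.
  have := lagrange_weight_neq0 piv_nodes_inj (admissible_nodes f0_adm) k.
  by rewrite /lagrange_weight ffunE eqxx.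
rewrite leibniz_term_admissible // cr1 mulr1 moved_k ffunE eqxx.
rewrite pmulr_rge0 ?E_I_pivots_gt0 // pmulr_lge0 ?expR_gt0 // => Aw_ge0.
by rewrite lt_def mulf_neq0.
Qed.

Lemma leibniz_term_selection f : admissible f ->
  leibniz_term kappa A x y t f = E_I kappa (pivot_set piv) x y t * theta_summand (selection f).
Proof.
move=> f_adm.
rewrite leibniz_term_admissible // /theta_summand prod_C_selection // sum_phit_selection //.
rewrite expR_sum -mulrA; congr (_ * (_ * _)); apply: eq_bigr => k fk.
have /andP [fk_npiv Akfk] := admissible_moved f_adm fk.
have Aw_pos := pivot_weight_pos fk_npiv Akfk.
by rewrite [RHS]expRD gtr0_norm // lnK ?posrE // mulrC.
Qed.

End Selections.

Unset Implicit Arguments. Set Strict Implicit.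

Theorem mainTheorem7 (R : realType) (N M : nat) (kappa : 'I_M -> R)
  (A : 'M[R]_(N, M)) (piv : 'I_N -> 'I_M) :
  (N < M)%N ->
  (forall i j : 'I_M, (i < j)%N -> kappa i < kappa j) ->
  \rank A = N ->
  rref_with_pivots A piv ->
  totally_nonnegative A ->
  irreducible_rref A piv ->
  forall x y t : R,
    tau kappa A x y t / E_I kappa (pivot_set piv) x y t
    = theta_tilde (C_ kappa (A:=A) (piv:=piv)) (fun s => phit_ kappa s x y t).
Proof.
move=> lt_NM kappa_incr _ [piv_incr A_piv1 A_piv0 _] A_tnn _ x y t.
have E0_gt0 := E_I_pivots_gt0 x y t kappa_incr piv_incr.
rewrite (tau_leibniz kappa A x y t (Ordinal lt_NM)).
rewrite (sum_leibniz_admissible A_piv0 (E0 := E_I kappa (pivot_set piv) x y t)) => [|f f_adm].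
  by rewrite mulrC mulKf ?gt_eqF.
exact: leibniz_term_selection.
Qed.
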